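(* (a) The cell $S_{s_1,s_1}$ is the disjoint union of exactly two $G$-orbits of points $(P,Ps_1,Ps_1n)$: $n=n(1,0,0)$, dimension $5$, stabilizer $\left\{\begin{pmatrix}a&0&y\\0&a&z\\0&0&1/a^2\end{pmatrix}:a\in\mathbb{R}^\times,y,z\in\mathbb{R}\right\}$; $n=n(0,0,0)$, dimension $4$, stabilizer $\left\{\begin{pmatrix}a&0&y\\0&b&z\\0&0&1/(ab)\end{pmatrix}:a,b\in\mathbb{R}^\times,y,z\in\mathbb{R}\right\}$. (b) The cell $S_{s_1,s_2}$ is a single $G$-orbit, that of $(P,Ps_1,Ps_2)$, of dimension $5$ with stabilizer $\left\{\begin{pmatrix}a&0&y\\0&b&0\\0&0&1/(ab)\end{pmatrix}:a,b\in\mathbb{R}^\times,y\in\mathbb{R}\right\}$. (c) The cell $S_{s_1,1}$ is a single $G$-orbit, that of $(P,Ps_1,P)$, of dimension $4$ with stabilizer $\left\{\begin{pmatrix}a&0&y\\0&b&z\\0&0&1/(ab)\end{pmatrix}:a,b\in\mathbb{R}^\times,y,z\in\mathbb{R}\right\}$. (d) The cell $S_{s_2,s_2}$ is the disjoint union of exactly two $G$-orbits of points $(P,Ps_2,Ps_2n)$: $n=n(0,0,1)$, dimension $5$, stabilizer $\left\{\begin{pmatrix}1/a^2&x&y\\0&a&0\\0&0&a\end{pmatrix}:a\in\mathbb{R}^\times,x,y\in\mathbb{R}\right\}$; $n=n(0,0,0)$, dimension $4$, stabilizer $\left\{\begin{pmatrix}a&x&y\\0&b&0\\0&0&1/(ab)\end{pmatrix}:a,b\in\mathbb{R}^\times,x,y\in\mathbb{R}\right\}$.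 (e) The cell $S_{s_2,1}$ is a single $G$-orbit, that of $(P,Ps_2,P)$, of dimension $4$ with stabilizer $\left\{\begin{pmatrix}a&x&y\\0&b&0\\0&0&1/(ab)\end{pmatrix}:a,b\in\mathbb{R}^\times,x,y\in\mathbb{R}\right\}$. (f) The cell $S_{1,1}$ is a single $G$-orbit of dimension $3$ with stabilizer $P$.
   Context: $G=\mathrm{SL}_3(\mathbb{R})$, $P$ the upper triangular matrices in $G$; $G$ acts on $X=(P\backslash G)^3$ by right multiplication in each coordinate. $n(x,y,z)=\begin{pmatrix}1&x&y\\0&1&z\\0&0&1\end{pmatrix}$. $1$ is the identity matrix, $s_1=\begin{pmatrix}0&1&0\\1&0&0\\0&0&-1\end{pmatrix}$, $s_2=\begin{pmatrix}-1&0&0\\0&0&1\\0&1&0\end{pmatrix}$. $S_{v,w}=\big(\{P\}\times P\backslash PvP\times P\backslash PwP\big)\cdot G$. The stabilizer of $(P,Pv,Pwn)$ is $P\cap v^{-1}Pv\cap (wn)^{-1}P(wn)$. *)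

From HB Require Import structures.
From mathcomp Require Import all_boot all_order all_algebra.
From mathcomp Require Import classical_sets boolp reals topology normedtype sequences.
From mathcomp Require Import Rstruct Rstruct_topology.
Set Implicit Arguments. Unset Strict Implicit. Unset Printing Implicit Defensive.
Import Order.TTheory GRing.Theory Num.Theory.
Local Open Scope classical_set_scope.
Local Open Scope ring_scope.

Notation RR := Rdefinitions.R.
Notation M3 := 'M[RR]_3.

Definition mx3 (a11 a12 a13 a21 a22 a23 a31 a32 a33 : RR) : M3 :=
  \matrix_(i < 3, j < 3)
    nth 0 (nth [::] [:: [:: a11; a12; a13]; [:: a21; a22; a23]; [:: a31; a32; a33]] i) j.

Definition inG (g : M3) : Prop := \det g = 1.
Definition inP (p : M3) : Prop := inG p /\ forall i j : 'I_3, (nat_of_ord j < nat_of_ord i)%N -> p i j = 0.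

Definition nmx (x y z : RR) : M3 := mx3 1 x y 0 1 z 0 0 1.
Definition s1 : M3 := mx3 0 1 0 1 0 0 0 0 (-1).
Definition s2 : M3 := mx3 (-1) 0 0 0 0 1 0 1 0.

(* Right cosets: P g = P h  iff  h = p g for some p in P *)
Definition coset_eq (g h : M3) : Prop := exists p, inP p /\ h = p *m g.

(* A point of X = (P\G)^3 is represented by a triple of elements of G. *)
Definition triple := (M3 * M3 * M3)%type.
Definition inGt (x : triple) : Prop := [/\ inG x.1.1, inG x.1.2 & inG x.2].
Definition xeq (x y : triple) : Prop :=
  [/\ coset_eq x.1.1 y.1.1, coset_eq x.1.2 y.1.2 & coset_eq x.2 y.2].
Definition xact (x : triple) (g : M3) : triple := (x.1.1 *m g, x.1.2 *m g, x.2 *m g).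

Definition Gorbit (x : triple) : set triple :=
  [set y | inGt y /\ exists g, inG g /\ xeq y (xact x g)].

(* the cell S_{v,w} = ({P} x P\PvP x P\PwP) . G *)
Definition cell (v w : M3) : set triple :=
  [set y | inGt y /\ exists g p q, [/\ inG g, inP p, inP q &
        xeq y (xact (1%:M, v *m p, w *m q) g)]].

Definition stab (x : triple) : set M3 := [set g | inG g /\ xeq (xact x g) x].

Definition mexp (A : M3) : M3 :=
  \matrix_(i < 3, j < 3)
    limn (fun N : nat => (\sum_(k < N) (k`!%:R)^-1 *: A ^+ k) i j).

Definition lie_alg (H : set M3) : set M3 := [set A | forall t : RR, H (mexp (t *: A))].

Definition has_dim (L : set M3) (d : nat) : Prop :=
  (exists s : seq M3, [/\ size s = d, free s & forall A, A \in s -> L A]) /\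
  ~ (exists s : seq M3, [/\ size s = d.+1, free s & forall A, A \in s -> L A]).

(* the orbit G.x (= G / Stab x) has dimension d = dim G - dim Stab x, dim G = 8 *)
Definition orbit_dim (x : triple) (d : nat) : Prop :=
  (d <= 8)%N /\ has_dim (lie_alg (stab x)) (8 - d).

(* Every point of the cell S_{v,w} is (P, Pvp, Pwq).g with p, q in P.  Acting
   by elements of P one may bring u = p q^-1 to a normal form, which leaves only
   the representatives (P, Pv, Pwn) of the statement; two representatives of the
   same cell are separated by an entry of u that this action cannot change.  The
   stabiliser of (P, Pv, Pw) is P meet v^-1 P v meet w^-1 P w, computed entrywise.
   For the Lie algebra {A | exp(tA) in Stab for all t} of a stabiliser: as
   exp(tA) = 1 + tA + O(t^2), every polynomial relation holding on the stabiliser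
   (a vanishing entry, two equal diagonal entries, diagonal product 1) gives the
   corresponding linear relation on A; conversely the one-parameter subgroups
   exp(tE) of an explicit basis stay in the stabiliser, and the basis is free
   since each of its elements has a pivot entry where the others vanish. *)

From mathcomp Require Import all_boot all_order all_algebra.
From mathcomp Require Import classical_sets boolp reals topology normedtype sequences exp.
From mathcomp Require Import Rstruct Rstruct_topology.
From mathcomp Require Import ring lra.
Import Order.TTheory GRing.Theory Num.Theory.
Local Open Scope classical_set_scope.
Local Open Scope ring_scope.

Lemma mx3E (M : M3) :
  M = mx3 (M 0 0) (M 0 1) (M 0 2%:R) (M 1 0) (M 1 1) (M 1 2%:R)
          (M 2%:R 0) (M 2%:R 1) (M 2%:R 2%:R).
Proof.
apply/matrixP => i j; rewrite mxE.
by case: i => [[|[|[|i]]] Hi] //; case: j => [[|[|[|j]]] Hj] //=;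
  congr (M _ _); apply: val_inj.
Qed.

Lemma mx3_congr a11 a12 a13 a21 a22 a23 a31 a32 a33
                b11 b12 b13 b21 b22 b23 b31 b32 b33 :
  a11 = b11 -> a12 = b12 -> a13 = b13 -> a21 = b21 -> a22 = b22 -> a23 = b23 ->
  a31 = b31 -> a32 = b32 -> a33 = b33 ->
  mx3 a11 a12 a13 a21 a22 a23 a31 a32 a33 = mx3 b11 b12 b13 b21 b22 b23 b31 b32 b33.
Proof. by move=> *; subst. Qed.

Lemma mulmx3 a11 a12 a13 a21 a22 a23 a31 a32 a33
             b11 b12 b13 b21 b22 b23 b31 b32 b33 :
  mx3 a11 a12 a13 a21 a22 a23 a31 a32 a33 *m mx3 b11 b12 b13 b21 b22 b23 b31 b32 b33 =
  mx3 (a11*b11 + a12*b21 + a13*b31) (a11*b12 + a12*b22 + a13*b32) (a11*b13 + a12*b23 + a13*b33)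
      (a21*b11 + a22*b21 + a23*b31) (a21*b12 + a22*b22 + a23*b32) (a21*b13 + a22*b23 + a23*b33)
      (a31*b11 + a32*b21 + a33*b31) (a31*b12 + a32*b22 + a33*b32) (a31*b13 + a32*b23 + a33*b33).
Proof.
apply/matrixP => i j; rewrite !mxE !big_ord_recr big_ord0 /= !mxE /=.
by case: i => [[|[|[|i]]] Hi] //; case: j => [[|[|[|j]]] Hj] //=; rewrite add0r.
Qed.

Lemma addmx3 a11 a12 a13 a21 a22 a23 a31 a32 a33
             b11 b12 b13 b21 b22 b23 b31 b32 b33 :
  mx3 a11 a12 a13 a21 a22 a23 a31 a32 a33 + mx3 b11 b12 b13 b21 b22 b23 b31 b32 b33 =
  mx3 (a11 + b11) (a12 + b12) (a13 + b13) (a21 + b21) (a22 + b22) (a23 + b23)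
      (a31 + b31) (a32 + b32) (a33 + b33).
Proof.
apply/matrixP => i j; rewrite !mxE.
by case: i => [[|[|[|i]]] Hi] //; case: j => [[|[|[|j]]] Hj] //=; rewrite addr0.
Qed.

Lemma scalemx3 t a11 a12 a13 a21 a22 a23 a31 a32 a33 :
  t *: mx3 a11 a12 a13 a21 a22 a23 a31 a32 a33 =
  mx3 (t * a11) (t * a12) (t * a13) (t * a21) (t * a22) (t * a23)
      (t * a31) (t * a32) (t * a33).
Proof.
apply/matrixP => i j; rewrite !mxE.
by case: i => [[|[|[|i]]] Hi] //; case: j => [[|[|[|j]]] Hj] //=; rewrite mulr0.
Qed.

Lemma mx3_1 : (1%:M : M3) = mx3 1 0 0 0 1 0 0 0 1.
Proof.
apply/matrixP => i j; rewrite !mxE.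
by case: i => [[|[|[|i]]] Hi] //; case: j => [[|[|[|j]]] Hj].
Qed.

Lemma mx3_0 : (0 : M3) = mx3 0 0 0 0 0 0 0 0 0.
Proof.
apply/matrixP => i j; rewrite !mxE.
by case: i => [[|[|[|i]]] Hi] //; case: j => [[|[|[|j]]] Hj].
Qed.

Lemma det_mx2 (B : 'M[RR]_2) : \det B = B 0 0 * B 1 1 - B 0 1 * B 1 0.
Proof.
rewrite (expand_det_row _ 0) !big_ord_recr big_ord0 /= add0r /cofactor !det_mx11 !mxE /=.
have -> : widen_ord (m:=2) (leqnSn 1) ord_max = 0 by apply: val_inj.
have -> : lift (0 : 'I_2) 0 = 1 by apply: val_inj.
have -> : lift (ord_max : 'I_2) 0 = 0 by apply: val_inj.
have -> : (ord_max : 'I_2) = 1 by apply: val_inj.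
by rewrite expr0 expr1; ring.
Qed.

Lemma det_mx3 a11 a12 a13 a21 a22 a23 a31 a32 a33 :
  \det (mx3 a11 a12 a13 a21 a22 a23 a31 a32 a33) =
  a11 * (a22 * a33 - a23 * a32) - a12 * (a21 * a33 - a23 * a31)
  + a13 * (a21 * a32 - a22 * a31).
Proof.
rewrite (expand_det_row _ 0) !big_ord_recr big_ord0 /= add0r.
by rewrite /cofactor !det_mx2 !mxE /= expr0 expr1 -signr_odd /= expr0; ring.
Qed.

Lemma invmx_eq (A B : M3) : B *m A = 1%:M -> invmx A = B.
Proof.
move=> BA; have [_ uA] := mulmx1_unit BA.
by rewrite -[RHS](mulmxK uA) BA mul1mx.
Qed.

Lemma inG1 : inG 1%:M.
Proof. exact: det1. Qed.

Lemma inG_mul g h : inG g -> inG h -> inG (g *m h).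
Proof. by rewrite /inG det_mulmx => -> ->; rewrite mulr1. Qed.

Lemma inG_inv g : inG g -> inG (invmx g).
Proof. by rewrite /inG det_inv => ->; rewrite invr1. Qed.

Lemma inG_unitmx {g} : inG g -> g \in unitmx.
Proof. by rewrite unitmxE => ->; rewrite unitr1. Qed.

Lemma inP_inG {p} : inP p -> inG p.
Proof. by case. Qed.

Lemma inP_mx3 a b c d e f g h i :
  inP (mx3 a b c d e f g h i) <-> [/\ d = 0, g = 0, h = 0 & a * e * i = 1].
Proof.
split=> [[detp lower] | [-> -> -> aei]].
  have := lower 1 0 isT; have := lower 2%:R 0 isT; have := lower 2%:R 1 isT.
  rewrite !mxE /= => h0 g0 d0; split=> //.
  by move: detp; rewrite /inG det_mx3 d0 g0 h0 => <-; ring.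
split; first by rewrite /inG det_mx3 -aei; ring.
by move=> [[|[|[|?]]] ?] // [[|[|[|?]]] ?] //= _; rewrite mxE.
Qed.

Ltac field_nz := field; by repeat (apply/andP; split).

Lemma inP_form p : inP p ->
  exists a b c d e, [/\ a != 0, d != 0 & p = mx3 a b c 0 d e 0 0 (a * d)^-1].
Proof.
rewrite [p]mx3E => /inP_mx3[-> -> -> adf].
have ad0 : p 0 0 * p 1 1 != 0.
  by apply: contra_eq_neq adf => ->; rewrite mul0r eq_sym oner_neq0.
exists (p 0 0), (p 0 1), (p 0 2%:R), (p 1 1), (p 1 2%:R).
move: (ad0); rewrite mulf_eq0 negb_or => /andP[-> ->]; split=> //.
by rewrite -[p 2%:R 2%:R](mulKf ad0) adf mulr1.
Qed.

Lemma invmx_trig a b c d e f : a * d * f = 1 ->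
  invmx (mx3 a b c 0 d e 0 0 f) =
  mx3 (d * f) (- b * f) (b * e - c * d) 0 (a * f) (- a * e) 0 0 (a * d).
Proof.
by move=> adf; apply: invmx_eq; rewrite mulmx3 mx3_1; apply: mx3_congr; rewrite -?adf; ring.
Qed.

Lemma inP1 : inP 1%:M.
Proof. by rewrite mx3_1; apply/inP_mx3; split; rewrite ?mulr1. Qed.

Lemma inP_mul p q : inP p -> inP q -> inP (p *m q).
Proof.
move=> /inP_form[a [b [c [d [e [a0 d0 ->]]]]]] /inP_form[a' [b' [c' [d' [e' [a0' d0' ->]]]]]].
by rewrite mulmx3; apply/inP_mx3; split; [ring | ring | ring | field_nz].
Qed.

Lemma inP_inv p : inP p -> inP (invmx p).
Proof.
move=> /inP_form[a [b [c [d [e [a0 d0 ->]]]]]].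
rewrite invmx_trig; last by field_nz.
by apply/inP_mx3; split=> //; field_nz.
Qed.

Lemma coset_sym {g h} : coset_eq g h -> coset_eq h g.
Proof.
move=> [p [Pp ->]]; exists (invmx p); split; first exact: inP_inv.
by rewrite mulmxA mulVmx ?mul1mx // inG_unitmx //; apply: inP_inG.
Qed.

Lemma coset_trans {g h k} : coset_eq g h -> coset_eq h k -> coset_eq g k.
Proof.
move=> [p [Pp ->]] [q [Pq ->]]; exists (q *m p); split; first exact: inP_mul.
by rewrite mulmxA.
Qed.

Lemma coset_mulr {g h} k : coset_eq g h -> coset_eq (g *m k) (h *m k).
Proof. by move=> [p [Pp ->]]; exists p; rewrite mulmxA. Qed.

Lemma coset_eqE {g} h : inG g -> coset_eq g h <-> inP (h *m invmx g).
Proof.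
move=> Gg; split=> [[p [Pp ->]] | Phg]; first by rewrite mulmxK // inG_unitmx.
by exists (h *m invmx g); rewrite mulmxKV // inG_unitmx.
Qed.

Lemma xeq_sym {x y} : xeq x y -> xeq y x.
Proof. by case=> *; split; apply: coset_sym. Qed.

Lemma xeq_trans {x y z} : xeq x y -> xeq y z -> xeq x z.
Proof. by case=> xy1 xy2 xy3 [yz1 yz2 yz3]; split; apply: coset_trans; eassumption. Qed.

Lemma xeq_act {x y} g : xeq x y -> xeq (xact x g) (xact y g).
Proof. by case=> *; split; apply: coset_mulr. Qed.

Lemma xactM x g h : xact (xact x g) h = xact x (g *m h).
Proof. by rewrite /xact /= !mulmxA. Qed.

Lemma xactK x g : inG g -> xact (xact x g) (invmx g) = x.
Proof.
move=> Gg; rewrite xactM mulmxV ?inG_unitmx // /xact !mulmx1.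
by case: x => [[]].
Qed.

(** * Stabilisers, orbits and cells *)

Lemma stabE {v w} : inG v -> inG w ->
  stab (1%:M, v, w) =
  [set g | [/\ inP g, inP (v *m g *m invmx v) & inP (w *m g *m invmx w)]].
Proof.
move=> Gv Gw; apply/seteqP; split=> g /=.
  case=> _ [/coset_sym h1 /coset_sym h2 /coset_sym h3].
  move: h1 h2 h3; rewrite /= !coset_eqE //; last exact: inG1.
  by rewrite invmx1 mulmx1 mul1mx.
case=> Pg Pv Pw; split; first exact: inP_inG.
split; apply: coset_sym; apply/coset_eqE => //=; first exact: inG1.
by rewrite invmx1 mulmx1 mul1mx.
Qed.

Lemma stab_sub_inP {v w} : inG v -> inG w -> stab (1%:M, v, w) `<=` inP.
Proof. by move=> Gv Gw g; rewrite (stabE Gv Gw) => -[]. Qed.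

Lemma stab_diag {v} : inG v -> stab (1%:M, v, v) = stab (1%:M, v, 1%:M).
Proof.
move=> Gv; rewrite !stabE //; last exact: inG1.
apply/seteqP; split=> g /= [Pg Pv _]; split=> //.
by rewrite invmx1 mulmx1 mul1mx.
Qed.

Lemma orbit_sub_cell v w q : inP q -> Gorbit (1%:M, v, w *m q) `<=` cell v w.
Proof.
move=> Pq y [Gy [g [Gg yg]]]; split=> //.
by exists g, 1%:M, q; rewrite mulmx1; split=> //; exact: inP1.
Qed.

(* (P, Pvp, Pwq).g = (P, Pv, Pwn).(hpg) whenever vhv^-1 and wnh(pq^-1)w^-1 lie in P. *)
Lemma cell_sub_orbit v w (X : set triple) : inG v -> inG w ->
  (forall u, inP u -> exists n h, [/\ Gorbit (1%:M, v, w *m n) `<=` X, inP h,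
       inP (v *m h *m invmx v) & inP (w *m n *m h *m u *m invmx w)]) ->
  cell v w `<=` X.
Proof.
move=> Gv Gw reduce y [Gy [g [p [q [Gg Pp Pq yE]]]]].
have Pu : inP (p *m invmx q) by apply: inP_mul => //; exact: inP_inv.
have [n [h [sub Ph Pvh Pw]]] := reduce _ Pu.
have uq := inG_unitmx (inP_inG Pq).
apply: sub; split=> //; exists (h *m p *m g); split.
  by do 2?apply: inG_mul => //; exact: inP_inG.
apply: (xeq_trans yE); rewrite -xactM; apply: xeq_act; split=> /=.
- by exists (h *m p); rewrite mul1mx mulmx1; split=> //; exact: inP_mul.
- exists (v *m h *m invmx v); split=> //.
  by rewrite [RHS]mulmxA mulmxKV ?mulmxA // inG_unitmx.
- exists (w *m n *m h *m (p *m invmx q) *m invmx w); split=> //.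
  by rewrite !mulmxA mulmxKV ?inG_unitmx // mulmxKV.
Qed.

Lemma cell_v1 v : inG v -> cell v 1%:M = Gorbit (1%:M, v, 1%:M).
Proof.
move=> Gv; apply/seteqP; split; last by rewrite -{2}[1%:M]mulmx1; exact/orbit_sub_cell/inP1.
apply: cell_sub_orbit (Gv) inG1 _ => u Pu; exists 1%:M, 1%:M.
rewrite invmx1 !mulmx1 mul1mx mulmxV ?inG_unitmx //; split=> //; exact: inP1.
Qed.

Lemma orbit_disj x y :
  (forall k, inG k -> ~ xeq x (xact y k)) -> Gorbit x `&` Gorbit y = set0.
Proof.
move=> noeq; apply/seteqP; split=> // z [[_ [g [Gg zx]]] [_ [h [Gh zy]]]].
have := xeq_act (invmx g) (xeq_trans (xeq_sym zx) zy).
by rewrite xactK // xactM; apply: noeq; apply: inG_mul => //; exact: inG_inv.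
Qed.

Lemma inG_s1 : inG s1. Proof. by rewrite /inG det_mx3; ring. Qed.
Lemma inG_s2 : inG s2. Proof. by rewrite /inG det_mx3; ring. Qed.

Lemma invmx_s1 : invmx s1 = s1.
Proof. by apply: invmx_eq; rewrite mulmx3 mx3_1; apply: mx3_congr; ring. Qed.

Lemma invmx_s2 : invmx s2 = s2.
Proof. by apply: invmx_eq; rewrite mulmx3 mx3_1; apply: mx3_congr; ring. Qed.

Lemma inP_nmx x y z : inP (nmx x y z).
Proof. by apply/inP_mx3; split; rewrite ?mulr1. Qed.

Lemma nmx0 : nmx 0 0 0 = 1%:M.
Proof. by rewrite mx3_1. Qed.

Lemma invmx_nmx x y z : invmx (nmx x y z) = nmx (- x) (x * z - y) (- z).
Proof. by rewrite invmx_trig ?mulr1 //; apply: mx3_congr; ring. Qed.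

Lemma inG_mul_nmx {g} x y z : inG g -> inG (g *m nmx x y z).
Proof. by move=> Gg; apply: inG_mul Gg (inP_inG (inP_nmx x y z)). Qed.

Lemma invmx_mul_nmx g x y z : inG g ->
  invmx (g *m nmx x y z) = nmx (- x) (x * z - y) (- z) *m invmx g.
Proof.
move=> Gg; have un := inG_unitmx (inP_inG (inP_nmx x y z)).
by apply: invmx_eq; rewrite -invmx_nmx mulmxA mulmxKV ?mulVmx // inG_unitmx.
Qed.

Ltac mx3_expand :=
  rewrite ?invmx_mul_nmx ?invmx_s1 ?invmx_s2 ?invmx_nmx ?invmx1;
  try exact: inG_s1; try exact: inG_s2;
  rewrite /s1 /s2 /nmx ?mx3_1 !mulmx3.
Ltac mx3_simpl :=
  rewrite ?(mul0r, mulr0, mul1r, mulr1, add0r, addr0, oppr0, subr0, sub0r,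
            mulN1r, mulrN1, opprK).
Ltac inP_solve := mx3_expand; apply/inP_mx3; split; mx3_simpl; try ring; try field_nz.

Lemma orbits_s1s1_disjoint :
  Gorbit (1%:M, s1, s1 *m nmx 1 0 0) `&` Gorbit (1%:M, s1, s1 *m nmx 0 0 0) = set0.
Proof.
apply: orbit_disj => k Gk [/= /(coset_eqE _ inG1) + /(coset_eqE _ inG_s1) +
                           /(coset_eqE _ (inG_mul_nmx _ _ _ inG_s1))].
rewrite invmx1 mulmx1 mul1mx => /inP_form[a [b [c [d [e [a0 d0 ->]]]]]].
mx3_expand; mx3_simpl; case/inP_mx3 => -> _ _ _; case/inP_mx3.
by rewrite addr0 => /eqP; rewrite oppr_eq0 (negbTE a0).
Qed.

Lemma cell_s1s1 :
  cell s1 s1 = Gorbit (1%:M, s1, s1 *m nmx 1 0 0) `|` Gorbit (1%:M, s1, s1 *m nmx 0 0 0).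
Proof.
apply/seteqP; split; last by move=> z [] /orbit_sub_cell; apply; exact: inP_nmx.
apply: cell_sub_orbit inG_s1 inG_s1 _ => u /inP_form[a [b [c [d [e [a0 d0 ->]]]]]].
(* The (1,2) entry b of u is either 0 or can be scaled to 1 by h. *)
have [-> | b0] := eqVneq b 0.
  exists (nmx 0 0 0), 1%:M; split; [by move=> z; right | exact: inP1 | inP_solve | inP_solve].
exists (nmx 1 0 0), (mx3 d 0 0 0 (- b) 0 0 0 (- (b * d)^-1)).
split; [by move=> z; left | by apply/inP_mx3; split=> //; field_nz | inP_solve | inP_solve].
Qed.

Lemma stab_s1_1 : stab (1%:M, s1, 1%:M) =
  [set g | exists a b y z, [/\ a != 0, b != 0 & g = mx3 a 0 y 0 b z 0 0 (a * b)^-1]].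
Proof.
rewrite (stabE inG_s1 inG1); apply/seteqP; split=> g /=.
  case=> /inP_form[a [b [c [d [e [a0 d0 ->]]]]]]; mx3_expand; mx3_simpl.
  by case/inP_mx3 => -> _ _ _ _; exists a, d, c, e.
case=> a [b [y [z [a0 b0 ->]]]].
by split; [apply/inP_mx3; split=> //; field_nz | inP_solve | inP_solve].
Qed.

Lemma stab_s1s1n : stab (1%:M, s1, s1 *m nmx 1 0 0) =
  [set g | exists a y z, a != 0 /\ g = mx3 a 0 y 0 a z 0 0 (a ^+ 2)^-1].
Proof.
rewrite (stabE inG_s1 (inG_mul_nmx 1 0 0 inG_s1)); apply/seteqP; split=> g /=.
  case=> /inP_form[a [b [c [d [e [a0 d0 ->]]]]]]; mx3_expand; mx3_simpl.
  case/inP_mx3 => b0 _ _ _; case/inP_mx3; rewrite b0; mx3_simpl => da _ _ _.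
  have -> : d = a by lra.
  by exists a, c, e; rewrite expr2.
case=> a [y [z [a0 ->]]].
by split; [apply/inP_mx3; split=> //; field_nz | inP_solve | inP_solve].
Qed.

Lemma stab_s1s2 : stab (1%:M, s1, s2) =
  [set g | exists a b y, [/\ a != 0, b != 0 & g = mx3 a 0 y 0 b 0 0 0 (a * b)^-1]].
Proof.
rewrite (stabE inG_s1 inG_s2); apply/seteqP; split=> g /=.
  case=> /inP_form[a [b [c [d [e [a0 d0 ->]]]]]]; mx3_expand; mx3_simpl.
  by case/inP_mx3 => -> _ _ _; case/inP_mx3 => _ _ -> _; exists a, d, c.
case=> a [b [y [a0 b0 ->]]].
by split; [apply/inP_mx3; split=> //; field_nz | inP_solve | inP_solve].
Qed.

Lemma cell_s1s2 : cell s1 s2 = Gorbit (1%:M, s1, s2).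
Proof.
apply/seteqP; split; last by rewrite -{1}[s2]mulmx1; exact/orbit_sub_cell/inP1.
apply: cell_sub_orbit inG_s1 inG_s2 _ => u /inP_form[a [b [c [d [e [a0 d0 ->]]]]]].
exists 1%:M, (mx3 1 0 0 0 1 (- (e * (a * d))) 0 0 1); rewrite mulmx1.
by split=> //; [apply/inP_mx3; split; mx3_simpl | inP_solve | inP_solve].
Qed.

Lemma stab_s2_1 : stab (1%:M, s2, 1%:M) =
  [set g | exists a b x y, [/\ a != 0, b != 0 & g = mx3 a x y 0 b 0 0 0 (a * b)^-1]].
Proof.
rewrite (stabE inG_s2 inG1); apply/seteqP; split=> g /=.
  case=> /inP_form[a [b [c [d [e [a0 d0 ->]]]]]]; mx3_expand; mx3_simpl.
  by case/inP_mx3 => _ _ -> _ _; exists a, d, b, c.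
case=> a [b [x [y [a0 b0 ->]]]].
by split; [apply/inP_mx3; split=> //; field_nz | inP_solve | inP_solve].
Qed.

Lemma stab_s2s2n : stab (1%:M, s2, s2 *m nmx 0 0 1) =
  [set g | exists a x y, a != 0 /\ g = mx3 (a ^+ 2)^-1 x y 0 a 0 0 0 a].
Proof.
rewrite (stabE inG_s2 (inG_mul_nmx 0 0 1 inG_s2)); apply/seteqP; split=> g /=.
  case=> /inP_form[a [b [c [d [e [a0 d0 ->]]]]]]; mx3_expand; mx3_simpl.
  case/inP_mx3 => _ _ e0 _; case/inP_mx3; rewrite e0; mx3_simpl => _ _ ad _.
  have {ad} ad : (a * d)^-1 = d by lra.
  have add : a * d * d = 1 by rewrite -[X in _ * X = _]ad mulfV ?mulf_neq0.
  have a_d : a = (d ^+ 2)^-1.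
    by apply: (mulIf (expf_neq0 2 d0)); rewrite mulVf ?expf_neq0 // expr2 mulrA.
  by exists d, b, c; rewrite ad a_d.
case=> a [x [y [a0 ->]]].
by split; [apply/inP_mx3; split=> //; field_nz | inP_solve | inP_solve].
Qed.

Lemma cell_s2s2 :
  cell s2 s2 = Gorbit (1%:M, s2, s2 *m nmx 0 0 1) `|` Gorbit (1%:M, s2, s2 *m nmx 0 0 0).
Proof.
apply/seteqP; split; last by move=> z [] /orbit_sub_cell; apply; exact: inP_nmx.
apply: cell_sub_orbit inG_s2 inG_s2 _ => u /inP_form[a [b [c [d [e [a0 d0 ->]]]]]].
(* The (2,3) entry e of u is either 0 or can be scaled to 1 by h. *)
have [-> | e0] := eqVneq e 0.
  exists (nmx 0 0 0), 1%:M; split; [by move=> z; right | exact: inP1 | inP_solve | inP_solve].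
exists (nmx 0 0 1), (mx3 (- (e * (a * d)^-1)^-1) 0 0 0 ((a * d)^-1) 0 0 0 (- e)).
split; [by move=> z; left | by apply/inP_mx3; split=> //; field_nz | inP_solve | inP_solve].
Qed.

Lemma orbits_s2s2_disjoint :
  Gorbit (1%:M, s2, s2 *m nmx 0 0 1) `&` Gorbit (1%:M, s2, s2 *m nmx 0 0 0) = set0.
Proof.
apply: orbit_disj => k Gk [/= /(coset_eqE _ inG1) + /(coset_eqE _ inG_s2) +
                           /(coset_eqE _ (inG_mul_nmx _ _ _ inG_s2))].
rewrite invmx1 mulmx1 mul1mx => /inP_form[a [b [c [d [e [a0 d0 ->]]]]]].
mx3_expand; mx3_simpl; case/inP_mx3 => _ _ -> _; case/inP_mx3 => _ _.
by rewrite addr0 => /eqP; rewrite oppr_eq0 (negbTE d0).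
Qed.

Lemma stab_1_1 : stab (1%:M, 1%:M, 1%:M) = inP.
Proof.
rewrite (stabE inG1 inG1) invmx1; apply/seteqP; split=> g /=.
  by case.
by rewrite mulmx1 mul1mx.
Qed.

(** * First-order expansions and the matrix exponential *)

Section FirstOrderExpansion.
Context {R : realFieldType}.
Implicit Types (f g : R -> R) (a b c d : R).

Definition approx1 f a b :=
  exists C, forall t, `|t| <= 1 -> `|f t - a - b * t| <= C * t ^+ 2.

Lemma approx1_ge0 {f a b} : approx1 f a b ->
  exists2 C, 0 <= C & forall t, `|t| <= 1 -> `|f t - a - b * t| <= C * t ^+ 2.
Proof.
move=> [C HC]; exists C => //.
by have := HC 1; rewrite normr1 expr1n !mulr1 => /(_ (lexx _)) /(le_trans (normr_ge0 _)).
Qed.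

Lemma approx1_lipschitz {f a b} : approx1 f a b ->
  exists2 K, 0 <= K & forall t, `|t| <= 1 -> `|f t - a| <= K * `|t|.
Proof.
move=> /approx1_ge0[C C0 HC]; exists (C + `|b|) => [|t t1]; first by rewrite addr_ge0.
have -> : f t - a = (f t - a - b * t) + b * t by ring.
rewrite (le_trans (ler_normD _ _)) // mulrDl normrM [`|b| * _]mulrC lerD2r.
apply: (le_trans (HC t t1)); rewrite ler_wpM2l // -real_normK ?num_real // expr2.
by rewrite ler_piMl.
Qed.

Lemma approx1_const {f a b} : approx1 f a b -> (forall t, f t = a) -> b = 0.
Proof.
move=> /approx1_ge0[C C0 HC] fa; apply/eqP; apply: contraT => b0.
have bp : 0 < `|b| by rewrite normr_gt0.
pose t := `|b| / (`|b| + C).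
have tp : 0 < t by rewrite divr_gt0 // ltr_wpDr.
have tbC : t * (`|b| + C) = `|b| by rewrite mulfVK // gt_eqF // ltr_wpDr.
have t1 : `|t| <= 1 by rewrite gtr0_norm // ler_pdivrMr ?mul1r ?lerDl // ltr_wpDr.
have := HC t t1; rewrite fa subrr sub0r normrN normrM (gtr0_norm tp) => bt.
have bCt : `|b| <= C * t by rewrite -(ler_pM2r tp) -mulrA -expr2.
have : `|b| * (`|b| + C) <= C * `|b|.
  by rewrite -[in X in _ <= X]tbC mulrA ler_pM2r // ltr_wpDr.
nra.
Qed.

Lemma approx1_sub {f g a b c d} : approx1 f a b -> approx1 g c d ->
  approx1 (fun t => f t - g t) (a - c) (b - d).
Proof.
move=> [C1 H1] [C2 H2]; exists (C1 + C2) => t t1.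
have -> : f t - g t - (a - c) - (b - d) * t = (f t - a - b * t) - (g t - c - d * t) by ring.
by rewrite (le_trans (ler_normB _ _)) // mulrDl lerD ?H1 ?H2.
Qed.

Lemma approx1_mul {f g a b c d} : approx1 f a b -> approx1 g c d ->
  approx1 (fun t => f t * g t) (a * c) (a * d + b * c).
Proof.
move=> af ag; move: (af) (ag) => /approx1_ge0[C1 C10 H1] /approx1_ge0[C2 C20 H2].
move: af ag => /approx1_lipschitz[K1 K10 L1] /approx1_lipschitz[K2 K20 L2].
exists (`|a| * C2 + `|c| * C1 + K1 * K2) => t t1.
have -> : f t * g t - a * c - (a * d + b * c) * t =
  a * (g t - c - d * t) + c * (f t - a - b * t) + (f t - a) * (g t - c) by ring.
rewrite (le_trans (ler_normD _ _)) // !(mulrDl _ _ (t ^+ 2)) lerD //.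
  by rewrite (le_trans (ler_normD _ _)) // -!mulrA !normrM lerD // ler_wpM2l ?H1 ?H2.
rewrite normrM -[t ^+ 2]real_normK ?num_real // expr2 mulrACA.
by rewrite ler_pM ?L1 ?L2.
Qed.

End FirstOrderExpansion.

Definition mx_l1norm {R : numDomainType} {m n} (A : 'M[R]_(m, n)) : R :=
  \sum_i \sum_j `|A i j|.

Lemma mx_l1norm_ge0 {R : numDomainType} {m n} (A : 'M[R]_(m, n)) : 0 <= mx_l1norm A.
Proof. by apply: sumr_ge0 => i _; apply: sumr_ge0. Qed.

Lemma norm_mxpow_le (R : numDomainType) n (A : 'M[R]_n.+1) k i j :
  `|(A ^+ k) i j| <= mx_l1norm A ^+ k.
Proof.
elim: k i j => [|k IHk] i j.
  by rewrite expr0 mxE; case: (i == j); rewrite ?normr1 ?normr0.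
rewrite exprS -mulmxE mxE (le_trans (ler_norm_sum _ _ _)) //.
apply: (@le_trans _ _ (\sum_l `|A i l| * mx_l1norm A ^+ k)).
  by apply: ler_sum => l _; rewrite normrM ler_wpM2l.
rewrite -mulr_suml exprS ler_wpM2r ?exprn_ge0 ?mx_l1norm_ge0 //.
rewrite /mx_l1norm [X in _ <= X](bigD1 i) //= lerDl.
by apply: sumr_ge0 => i' _; apply: sumr_ge0.
Qed.

Lemma mexpE (A : M3) i j :
  mexp A i j = limn (series (fun k => (k`!%:R)^-1 * (A ^+ k) i j)).
Proof.
rewrite mxE; congr (limn _); apply: funext => N.
by rewrite /series /= big_mkord summxE; apply: eq_bigr => k _; rewrite mxE.
Qed.

Lemma series_exp_coeff_le_expR n {x : RR} : 0 <= x -> series (exp_coeff x) n <= expR x.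
Proof.
move=> x0; apply: nondecreasing_cvgn_le; last exact: is_cvg_series_exp_coeff.
by apply: nondecreasing_series => k _ _; apply: exp_coeff_ge0.
Qed.

Section ExponentialSeriesEntry.
Variables (A : M3) (i j : 'I_3) (t : RR).
Let m := mx_l1norm A.
Let u k := (k`!%:R)^-1 * ((t *: A) ^+ k) i j.

Lemma mexp_term_le k : `|u k| <= `|t| ^+ k * exp_coeff m k.
Proof.
rewrite /u /exp_coeff /= exprZn mxE normrM normrM normrX ger0_norm ?invr_ge0 //.
by rewrite mulrCA ler_wpM2l ?exprn_ge0 // mulrC ler_wpM2r ?invr_ge0 // norm_mxpow_le.
Qed.

Lemma cvg_mexp_series : cvgn (series u).
Proof.
apply: (@normed_cvg _ RR^o).
apply: (@series_le_cvg _ _ (exp_coeff (`|t| * m))) => //.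
- by move=> k /=.
- by move=> k; rewrite exp_coeff_ge0 // mulr_ge0 ?mx_l1norm_ge0.
- by move=> k /=; apply: le_trans (mexp_term_le k) _; rewrite /exp_coeff /= exprMn mulrA.
- exact: is_cvg_series_exp_coeff.
Qed.

Lemma mexp_series_remainder n : `|t| <= 1 ->
  `|series u n.+2 - (1%:M : M3) i j - A i j * t| <= expR m * t ^+ 2.
Proof.
move=> t1; rewrite /series /= big_mkord !big_ord_recl /=.
have -> : u 0%N = (1%:M : M3) i j by rewrite /u expr0 fact0 invr1 mul1r.
have -> : u (bump 0 0) = A i j * t by rewrite /u /= expr1 invr1 mul1r mxE mulrC.
set S := \sum_(_ < n) _.
have -> : (1%:M : M3) i j + (A i j * t + S) - (1%:M : M3) i j - A i j * t = S by ring.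
apply: le_trans (ler_norm_sum _ _ _) _.
apply: (@le_trans _ _ (\sum_(k < n) t ^+ 2 * exp_coeff m k.+2)).
  apply: ler_sum => k _; apply: le_trans (mexp_term_le _) _.
  rewrite /bump /= !add1n ler_wpM2r ?exp_coeff_ge0 ?mx_l1norm_ge0 //.
  rewrite -real_normK ?num_real // -addn2 exprD ler_piMl ?exprn_ge0 //.
  exact: exprn_ile1.
rewrite -mulr_sumr [X in _ <= X]mulrC ler_wpM2l ?sqr_ge0 //.
apply: le_trans (series_exp_coeff_le_expR n.+2 (mx_l1norm_ge0 A)).
rewrite /series /= big_mkord !big_ord_recl /= addrA lerDr.
by rewrite addr_ge0 ?exp_coeff_ge0 ?mx_l1norm_ge0.
Qed.
End ExponentialSeriesEntry.

Lemma approx1_mexp (A : M3) i j :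
  approx1 (fun t => mexp (t *: A) i j) ((1%:M : M3) i j) (A i j).
Proof.
exists (expR (mx_l1norm A)) => t t1; rewrite mexpE.
have cv := cvg_mexp_series A i j t.
set s := series _ in cv *; set c := expR _ * _.
have rem : \forall n \near \oo, `|s n - (1%:M : M3) i j - A i j * t| <= c.
  by exists 2%N => // n /= n2; rewrite -(subnK n2) addn2; exact: mexp_series_remainder.
have lo : (1%:M : M3) i j + A i j * t - c <= limn s.
  by apply: limr_ge cv _; apply: filterS rem => n; rewrite ler_norml => /andP[+ _]; lra.
have hi : limn s <= (1%:M : M3) i j + A i j * t + c.
  by apply: limr_le cv _; apply: filterS rem => n; rewrite ler_norml => /andP[_ +]; lra.
by rewrite ler_norml; apply/andP; split; lra.
Qed.

Lemma expR_neq0 (x : RR) : expR x != 0.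
Proof. by rewrite gt_eqF // expR_gt0. Qed.

Lemma mexp_sqr0 (A : M3) : A *m A = 0 -> mexp A = 1%:M + A.
Proof.
move=> AA; apply/matrixP => i j; rewrite mexpE.
apply: cvg_lim; first exact: Rhausdorff.
apply: cvg_near_cst; exists 2%N => // n /= n2.
rewrite -(subnK n2) addn2 /series /= big_mkord !big_ord_recl big1 ?addr0.
  by rewrite /= expr0 expr1 !mxE /= invr1 !mul1r.
move=> k _; have -> : (lift ord0 (lift ord0 k) : nat) = k.+2 by [].
by rewrite !exprS mulrA -mulmxE AA mul0mx mxE mulr0.
Qed.

Lemma mexp_diag d1 d2 d3 :
  mexp (mx3 d1 0 0 0 d2 0 0 0 d3) = mx3 (expR d1) 0 0 0 (expR d2) 0 0 0 (expR d3).
Proof.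
have pow k : mx3 d1 0 0 0 d2 0 0 0 d3 ^+ k = mx3 (d1 ^+ k) 0 0 0 (d2 ^+ k) 0 0 0 (d3 ^+ k).
  elim: k => [|k IHk]; first by rewrite !expr0 -idmxE mx3_1.
  by rewrite exprS IHk -mulmxE mulmx3; apply: mx3_congr; rewrite ?exprS; ring.
have expR_series (x : RR) : limn (series (fun k => (k`!%:R)^-1 * x ^+ k)) = expR x.
  congr (limn _); apply: funext => N; congr series; apply: funext => k.
  by rewrite /exp_coeff mulrC.
apply/matrixP => i j; rewrite mexpE.
under [X in series X]eq_fun do rewrite pow.
rewrite mxE; case: i => [[|[|[|i]]] Hi] //; case: j => [[|[|[|j]]] Hj] //=;
  under [X in series X]eq_fun do rewrite mxE /=; rewrite ?expR_series //;
  under [X in series X]eq_fun do rewrite mulr0.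
all: apply: cvg_lim; first exact: Rhausdorff.
all: by apply: cvg_near_cst; near=> n; rewrite /series /= big1.
Unshelve. all: by end_near.
Qed.

Lemma mexp_nilpotent t x y z : x * z = 0 ->
  mexp (t *: mx3 0 x y 0 0 z 0 0 0) = mx3 1 (t * x) (t * y) 0 1 (t * z) 0 0 1.
Proof.
move=> xz; rewrite mexp_sqr0 ?mx3_1 scalemx3 ?addmx3; first by apply: mx3_congr; ring.
rewrite mulmx3 mx3_0; apply: mx3_congr; try ring.
by rewrite !mulr0 !mul0r !addr0 !add0r mulrACA xz mulr0.
Qed.

Lemma mexp_scale_diag t d1 d2 d3 :
  mexp (t *: mx3 d1 0 0 0 d2 0 0 0 d3) =
  mx3 (expR (t * d1)) 0 0 0 (expR (t * d2)) 0 0 0 (expR (t * d3)).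
Proof. by rewrite scalemx3 !mulr0 mexp_diag. Qed.

(** * Lie algebras of stabilisers *)

Section LieAlgebraConstraints.
Variable H : set M3.

Lemma lie_alg_entry0 A i j :
  i != j -> (forall g, H g -> g i j = 0) -> lie_alg H A -> A i j = 0.
Proof.
move=> ij H0 LA; have := approx1_mexp A i j; rewrite mxE (negbTE ij) /=.
by move/approx1_const; apply=> t; exact/H0/LA.
Qed.

Lemma lie_alg_diag_eq A i j :
  (forall g, H g -> g i i = g j j) -> lie_alg H A -> A i i = A j j.
Proof.
move=> Heq LA; have := approx1_sub (approx1_mexp A i i) (approx1_mexp A j j).
rewrite !mxE !eqxx subrr => /approx1_const ij0; apply/eqP; rewrite -subr_eq0 ij0 //.
by move=> t; rewrite Heq ?subrr //; exact: LA.
Qed.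

Lemma lie_alg_trace {A} :
  (forall g, H g -> g 0 0 * g 1 1 * g 2%:R 2%:R = 1) -> lie_alg H A ->
  A 0 0 + A 1 1 + A 2%:R 2%:R = 0.
Proof.
move=> Hdet LA.
have := approx1_mul (approx1_mul (approx1_mexp A 0 0) (approx1_mexp A 1 1))
                    (approx1_mexp A 2%:R 2%:R).
rewrite !mxE !eqxx /= !mul1r !mulr1 => /approx1_const; rewrite addrC [_ + A 0 0]addrC.
by apply=> t; apply: Hdet; exact: LA.
Qed.

End LieAlgebraConstraints.

Lemma inP_diag_prod g : inP g -> g 0 0 * g 1 1 * g 2%:R 2%:R = 1.
Proof. by rewrite {1}[g]mx3E => /inP_mx3[]. Qed.

Lemma lie_alg_upper_form {H : set M3} {A} : H `<=` inP -> lie_alg H A ->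
  A = mx3 (A 0 0) (A 0 1) (A 0 2%:R) 0 (A 1 1) (A 1 2%:R) 0 0 (- (A 0 0 + A 1 1)).
Proof.
move=> HP LA; have lower (i j : 'I_3) : (j < i)%N -> A i j = 0.
  move=> ji; apply: lie_alg_entry0 LA; first by rewrite neq_ltn ji orbT.
  by move=> g /HP[_]; apply.
have tr := lie_alg_trace H (fun g Hg => inP_diag_prod _ (HP g Hg)) LA.
have A22 : A 2%:R 2%:R = - (A 0 0 + A 1 1) by lra.
by rewrite {1}[A]mx3E (lower 1 0) // (lower 2%:R 0) // (lower 2%:R 1) // A22.
Qed.

Lemma free_pivot (K : fieldType) p q (B : seq 'M[K]_(p, q)) (pos : nat -> 'I_p * 'I_q) :
  (forall l m, (l < size B)%N -> (m < size B)%N -> B`_l (pos m).1 (pos m).2 = (l == m)%:R) ->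
  free B.
Proof.
move=> piv; have -> : B = in_tuple B by [].
apply/freeP => k Bk m.
have := congr1 (fun M : 'M[K]_(p, q) => M (pos m).1 (pos m).2) Bk.
rewrite summxE (bigD1 m) //= big1 => [|l lm]; last first.
  by rewrite mxE piv // -[(l == m :> nat)]/(l == m) (negbTE lm) mulr0.
by rewrite addr0 mxE piv // eqxx mulr1 mxE.
Qed.

Lemma has_dim_span (L : set M3) (B : seq M3) : free B -> (forall A, A \in B -> L A) ->
  (forall A, L A -> A \in <<B>>%VS) -> has_dim L (size B).
Proof.
move=> fB BL LB; split; first by exists B.
case=> s [sz fs sL].
have : (<<s>> <= <<B>>)%VS by apply/span_subvP => A /sL /LB.
by move/dimvS; rewrite (eqP fs) sz => /leq_trans/(_ (dim_span B)); rewrite ltnn.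
Qed.

Lemma lie_alg_dim (H : set M3) (B : seq M3) (pos : nat -> 'I_3 * 'I_3) :
  (forall l m, (l < size B)%N -> (m < size B)%N -> B`_l (pos m).1 (pos m).2 = (l == m)%:R) ->
  (forall A, A \in B -> forall t, H (mexp (t *: A))) ->
  (forall A, lie_alg H A -> A \in <<B>>%VS) ->
  has_dim (lie_alg H) (size B).
Proof. by move=> /free_pivot; apply: has_dim_span. Qed.

Lemma orbit_dim_stab x y d : stab x = stab y -> orbit_dim y d -> orbit_dim x d.
Proof. by rewrite /orbit_dim => ->. Qed.

Ltac span_solve := rewrite !rpredD // rpredZ // memv_span // !inE eqxx ?orbT.
Ltac mx3_entries :=
  apply: mx3_congr; rewrite ?mulr0 ?mulr1 ?mul1r ?mulrN1 ?exp.expR0 ?exp.expRN ?expr1n ?invr1 //.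

Lemma orbit_dim_s1s1n : orbit_dim (1%:M, s1, s1 *m nmx 1 0 0) 5.
Proof.
split=> //; have sP := stab_sub_inP inG_s1 (inG_mul_nmx 1 0 0 inG_s1).
rewrite stab_s1s1n in sP *.
apply: (lie_alg_dim _ [:: mx3 1 0 0 0 1 0 0 0 (-2); mx3 0 0 1 0 0 0 0 0 0;
                         mx3 0 0 0 0 0 1 0 0 0]
                    (nth (0, 0) [:: (0, 0); (0, 2%:R); (1, 2%:R)])).
- by move=> [|[|[|l]]] [|[|[|m]]] //= _ _; rewrite mxE.
- move=> A; rewrite !inE => /or3P[] /eqP-> t.
  + rewrite mexp_scale_diag; exists (expR t), 0, 0; split; first exact: expR_neq0.
    mx3_entries; rewrite (_ : t * -2 = - (t + t)); last by ring.
    by rewrite exp.expRN exp.expRD expr2.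
  + by rewrite mexp_nilpotent ?mul0r //; exists 1, t, 0; split; [exact: oner_neq0 | mx3_entries].
  + by rewrite mexp_nilpotent ?mul0r //; exists 1, 0, t; split; [exact: oner_neq0 | mx3_entries].
move=> A LA.
have A01 : A 0 1 = 0 by apply: lie_alg_entry0 LA => // g [a [y [z [_ ->]]]]; rewrite mxE.
have A11 : A 0 0 = A 1 1 by apply: lie_alg_diag_eq LA => g [a [y [z [_ ->]]]]; rewrite !mxE.
have -> : A = A 0 0 *: mx3 1 0 0 0 1 0 0 0 (-2) + A 0 2%:R *: mx3 0 0 1 0 0 0 0 0 0
              + A 1 2%:R *: mx3 0 0 0 0 0 1 0 0 0.
  by rewrite {1}(lie_alg_upper_form sP LA) !scalemx3 !addmx3; apply: mx3_congr; lra.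
by span_solve.
Qed.

Lemma orbit_dim_s1_1 : orbit_dim (1%:M, s1, 1%:M) 4.
Proof.
split=> //; have sP := stab_sub_inP inG_s1 inG1.
rewrite stab_s1_1 in sP *.
apply: (lie_alg_dim _ [:: mx3 1 0 0 0 0 0 0 0 (-1); mx3 0 0 0 0 1 0 0 0 (-1);
                         mx3 0 0 1 0 0 0 0 0 0; mx3 0 0 0 0 0 1 0 0 0]
                    (nth (0, 0) [:: (0, 0); (1, 1); (0, 2%:R); (1, 2%:R)])).
- by move=> [|[|[|[|l]]]] [|[|[|[|m]]]] //= _ _; rewrite mxE.
- move=> A; rewrite !inE => /or4P[] /eqP-> t.
  + rewrite mexp_scale_diag; exists (expR t), 1, 0, 0.
    by split; [exact: expR_neq0 | exact: oner_neq0 | mx3_entries].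
  + rewrite mexp_scale_diag; exists 1, (expR t), 0, 0.
    by split; [exact: oner_neq0 | exact: expR_neq0 | mx3_entries].
  + rewrite mexp_nilpotent ?mul0r //; exists 1, 1, t, 0.
    by split; [exact: oner_neq0 | exact: oner_neq0 | mx3_entries].
  + rewrite mexp_nilpotent ?mul0r //; exists 1, 1, 0, t.
    by split; [exact: oner_neq0 | exact: oner_neq0 | mx3_entries].
move=> A LA.
have A01 : A 0 1 = 0 by apply: lie_alg_entry0 LA => // g [a [b [y [z [_ _ ->]]]]]; rewrite mxE.
have -> : A = A 0 0 *: mx3 1 0 0 0 0 0 0 0 (-1) + A 1 1 *: mx3 0 0 0 0 1 0 0 0 (-1)
              + A 0 2%:R *: mx3 0 0 1 0 0 0 0 0 0 + A 1 2%:R *: mx3 0 0 0 0 0 1 0 0 0.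
  by rewrite {1}(lie_alg_upper_form sP LA) !scalemx3 !addmx3; apply: mx3_congr; lra.
by span_solve.
Qed.

Lemma orbit_dim_s1s2 : orbit_dim (1%:M, s1, s2) 5.
Proof.
split=> //; have sP := stab_sub_inP inG_s1 inG_s2.
rewrite stab_s1s2 in sP *.
apply: (lie_alg_dim _ [:: mx3 1 0 0 0 0 0 0 0 (-1); mx3 0 0 0 0 1 0 0 0 (-1);
                         mx3 0 0 1 0 0 0 0 0 0]
                    (nth (0, 0) [:: (0, 0); (1, 1); (0, 2%:R)])).
- by move=> [|[|[|l]]] [|[|[|m]]] //= _ _; rewrite mxE.
- move=> A; rewrite !inE => /or3P[] /eqP-> t.
  + rewrite mexp_scale_diag; exists (expR t), 1, 0.
    by split; [exact: expR_neq0 | exact: oner_neq0 | mx3_entries].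
  + rewrite mexp_scale_diag; exists 1, (expR t), 0.
    by split; [exact: oner_neq0 | exact: expR_neq0 | mx3_entries].
  + rewrite mexp_nilpotent ?mul0r //; exists 1, 1, t.
    by split; [exact: oner_neq0 | exact: oner_neq0 | mx3_entries].
move=> A LA.
have A01 : A 0 1 = 0 by apply: lie_alg_entry0 LA => // g [a [b [y [_ _ ->]]]]; rewrite mxE.
have A12 : A 1 2%:R = 0 by apply: lie_alg_entry0 LA => // g [a [b [y [_ _ ->]]]]; rewrite mxE.
have -> : A = A 0 0 *: mx3 1 0 0 0 0 0 0 0 (-1) + A 1 1 *: mx3 0 0 0 0 1 0 0 0 (-1)
              + A 0 2%:R *: mx3 0 0 1 0 0 0 0 0 0.
  by rewrite {1}(lie_alg_upper_form sP LA) !scalemx3 !addmx3; apply: mx3_congr; lra.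
by span_solve.
Qed.

Lemma orbit_dim_s2s2n : orbit_dim (1%:M, s2, s2 *m nmx 0 0 1) 5.
Proof.
split=> //; have sP := stab_sub_inP inG_s2 (inG_mul_nmx 0 0 1 inG_s2).
rewrite stab_s2s2n in sP *.
apply: (lie_alg_dim _ [:: mx3 (-2) 0 0 0 1 0 0 0 1; mx3 0 1 0 0 0 0 0 0 0;
                         mx3 0 0 1 0 0 0 0 0 0]
                    (nth (0, 0) [:: (1, 1); (0, 1); (0, 2%:R)])).
- by move=> [|[|[|l]]] [|[|[|m]]] //= _ _; rewrite mxE.
- move=> A; rewrite !inE => /or3P[] /eqP-> t.
  + rewrite mexp_scale_diag; exists (expR t), 0, 0; split; first exact: expR_neq0.
    mx3_entries; rewrite (_ : t * -2 = - (t + t)); last by ring.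
    by rewrite exp.expRN exp.expRD expr2.
  + by rewrite mexp_nilpotent ?mulr0 //; exists 1, t, 0; split; [exact: oner_neq0 | mx3_entries].
  + by rewrite mexp_nilpotent ?mul0r //; exists 1, 0, t; split; [exact: oner_neq0 | mx3_entries].
move=> A LA.
have A12 : A 1 2%:R = 0 by apply: lie_alg_entry0 LA => // g [a [x [y [_ ->]]]]; rewrite mxE.
have A22 : A 1 1 = A 2%:R 2%:R by apply: lie_alg_diag_eq LA => g [a [x [y [_ ->]]]]; rewrite !mxE.
have tr := lie_alg_trace _ (fun g Hg => inP_diag_prod _ (sP g Hg)) LA.
have -> : A = A 1 1 *: mx3 (-2) 0 0 0 1 0 0 0 1 + A 0 1 *: mx3 0 1 0 0 0 0 0 0 0
              + A 0 2%:R *: mx3 0 0 1 0 0 0 0 0 0.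
  by rewrite {1}(lie_alg_upper_form sP LA) !scalemx3 !addmx3; apply: mx3_congr; lra.
by span_solve.
Qed.

Lemma orbit_dim_s2_1 : orbit_dim (1%:M, s2, 1%:M) 4.
Proof.
split=> //; have sP := stab_sub_inP inG_s2 inG1.
rewrite stab_s2_1 in sP *.
apply: (lie_alg_dim _ [:: mx3 1 0 0 0 0 0 0 0 (-1); mx3 0 0 0 0 1 0 0 0 (-1);
                         mx3 0 1 0 0 0 0 0 0 0; mx3 0 0 1 0 0 0 0 0 0]
                    (nth (0, 0) [:: (0, 0); (1, 1); (0, 1); (0, 2%:R)])).
- by move=> [|[|[|[|l]]]] [|[|[|[|m]]]] //= _ _; rewrite mxE.
- move=> A; rewrite !inE => /or4P[] /eqP-> t.
  + rewrite mexp_scale_diag; exists (expR t), 1, 0, 0.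
    by split; [exact: expR_neq0 | exact: oner_neq0 | mx3_entries].
  + rewrite mexp_scale_diag; exists 1, (expR t), 0, 0.
    by split; [exact: oner_neq0 | exact: expR_neq0 | mx3_entries].
  + rewrite mexp_nilpotent ?mulr0 //; exists 1, 1, t, 0.
    by split; [exact: oner_neq0 | exact: oner_neq0 | mx3_entries].
  + rewrite mexp_nilpotent ?mul0r //; exists 1, 1, 0, t.
    by split; [exact: oner_neq0 | exact: oner_neq0 | mx3_entries].
move=> A LA.
have A12 : A 1 2%:R = 0.
  by apply: lie_alg_entry0 LA => // g [a [b [x [y [_ _ ->]]]]]; rewrite mxE.
have -> : A = A 0 0 *: mx3 1 0 0 0 0 0 0 0 (-1) + A 1 1 *: mx3 0 0 0 0 1 0 0 0 (-1)
              + A 0 1 *: mx3 0 1 0 0 0 0 0 0 0 + A 0 2%:R *: mx3 0 0 1 0 0 0 0 0 0.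
  by rewrite {1}(lie_alg_upper_form sP LA) !scalemx3 !addmx3; apply: mx3_congr; lra.
by span_solve.
Qed.

Lemma orbit_dim_1_1 : orbit_dim (1%:M, 1%:M, 1%:M) 3.
Proof.
split=> //; rewrite stab_1_1.
apply: (lie_alg_dim _ [:: mx3 1 0 0 0 0 0 0 0 (-1); mx3 0 0 0 0 1 0 0 0 (-1);
                         mx3 0 1 0 0 0 0 0 0 0; mx3 0 0 1 0 0 0 0 0 0;
                         mx3 0 0 0 0 0 1 0 0 0]
                    (nth (0, 0) [:: (0, 0); (1, 1); (0, 1); (0, 2%:R); (1, 2%:R)])).
- by move=> [|[|[|[|[|l]]]]] [|[|[|[|[|m]]]]] //= _ _; rewrite mxE.
- move=> A; rewrite !inE => /orP[/eqP-> t | /or4P[] /eqP-> t].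
  + rewrite mexp_scale_diag; apply/inP_mx3; split=> //.
    by rewrite mulr0 mulrN1 exp.expR0 !mulr1 exp.expRN mulfV // expR_neq0.
  + rewrite mexp_scale_diag; apply/inP_mx3; split=> //.
    by rewrite mulr0 mulrN1 exp.expR0 mulr1 mul1r exp.expRN mulfV // expR_neq0.
  + by rewrite mexp_nilpotent ?mulr0 //; apply/inP_mx3; split; rewrite ?mulr1.
  + by rewrite mexp_nilpotent ?mul0r //; apply/inP_mx3; split; rewrite ?mulr1.
  + by rewrite mexp_nilpotent ?mul0r //; apply/inP_mx3; split; rewrite ?mulr1.
move=> A LA.
have -> : A = A 0 0 *: mx3 1 0 0 0 0 0 0 0 (-1) + A 1 1 *: mx3 0 0 0 0 1 0 0 0 (-1)
              + A 0 1 *: mx3 0 1 0 0 0 0 0 0 0 + A 0 2%:R *: mx3 0 0 1 0 0 0 0 0 0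
              + A 1 2%:R *: mx3 0 0 0 0 0 1 0 0 0.
  by rewrite {1}(lie_alg_upper_form (fun _ => id) LA) !scalemx3 !addmx3; apply: mx3_congr; lra.
by span_solve.
Qed.

Theorem mainTheorem11 :
  let x_s1s1 := (1%:M, s1, s1 *m nmx 1 0 0) : triple in
  let y_s1s1 := (1%:M, s1, s1 *m nmx 0 0 0) : triple in
  let x_s2s2 := (1%:M, s2, s2 *m nmx 0 0 1) : triple in
  let y_s2s2 := (1%:M, s2, s2 *m nmx 0 0 0) : triple in
  let x_s1s2 := (1%:M, s1, s2) : triple in
  let x_s11 := (1%:M, s1, 1%:M) : triple in
  let x_s21 := (1%:M, s2, 1%:M) : triple in
  let x_11 := (1%:M, 1%:M, 1%:M) : triple in
  (* (a) *)
  [/\ cell s1 s1 = Gorbit x_s1s1 `|` Gorbit y_s1s1,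
      Gorbit x_s1s1 `&` Gorbit y_s1s1 = set0,
      orbit_dim x_s1s1 5,
      stab x_s1s1 = [set g | exists a y z : RR, a != 0 /\ g = mx3 a 0 y 0 a z 0 0 (a ^+ 2)^-1] &
      orbit_dim y_s1s1 4 /\
      stab y_s1s1 = [set g | exists a b y z : RR,
                      [/\ a != 0, b != 0 & g = mx3 a 0 y 0 b z 0 0 (a * b)^-1]]] /\
  (* (b) *)
  [/\ cell s1 s2 = Gorbit x_s1s2,
      orbit_dim x_s1s2 5 &
      stab x_s1s2 = [set g | exists a b y : RR,
                      [/\ a != 0, b != 0 & g = mx3 a 0 y 0 b 0 0 0 (a * b)^-1]]] /\
  (* (c) *)
  [/\ cell s1 1%:M = Gorbit x_s11,
      orbit_dim x_s11 4 &
      stab x_s11 = [set g | exists a b y z : RR,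
                      [/\ a != 0, b != 0 & g = mx3 a 0 y 0 b z 0 0 (a * b)^-1]]] /\
  (* (d) *)
  [/\ cell s2 s2 = Gorbit x_s2s2 `|` Gorbit y_s2s2,
      Gorbit x_s2s2 `&` Gorbit y_s2s2 = set0,
      orbit_dim x_s2s2 5,
      stab x_s2s2 = [set g | exists a x y : RR, a != 0 /\ g = mx3 (a ^+ 2)^-1 x y 0 a 0 0 0 a] &
      orbit_dim y_s2s2 4 /\
      stab y_s2s2 = [set g | exists a b x y : RR,
                      [/\ a != 0, b != 0 & g = mx3 a x y 0 b 0 0 0 (a * b)^-1]]] /\
  (* (e) *)
  [/\ cell s2 1%:M = Gorbit x_s21,
      orbit_dim x_s21 4 &
      stab x_s21 = [set g | exists a b x y : RR,
                      [/\ a != 0, b != 0 & g = mx3 a x y 0 b 0 0 0 (a * b)^-1]]] /\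
  (* (f) *)
  [/\ cell 1%:M 1%:M = Gorbit x_11,
      orbit_dim x_11 3 &
      stab x_11 = inP].
Proof.
have stab_y1 : stab (1%:M, s1, s1 *m nmx 0 0 0) = stab (1%:M, s1, 1%:M).
  by rewrite nmx0 mulmx1 (stab_diag inG_s1).
have stab_y2 : stab (1%:M, s2, s2 *m nmx 0 0 0) = stab (1%:M, s2, 1%:M).
  by rewrite nmx0 mulmx1 (stab_diag inG_s2).
cbv zeta; split; [|split; [|split; [|split; [|split]]]].
- split; [exact: cell_s1s1 | exact: orbits_s1s1_disjoint | exact: orbit_dim_s1s1n
         | exact: stab_s1s1n |].
  by split; [exact: orbit_dim_stab stab_y1 orbit_dim_s1_1 | rewrite stab_y1 stab_s1_1].
- by split; [exact: cell_s1s2 | exact: orbit_dim_s1s2 | exact: stab_s1s2].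
- by split; [exact: cell_v1 inG_s1 | exact: orbit_dim_s1_1 | exact: stab_s1_1].
- split; [exact: cell_s2s2 | exact: orbits_s2s2_disjoint | exact: orbit_dim_s2s2n
         | exact: stab_s2s2n |].
  by split; [exact: orbit_dim_stab stab_y2 orbit_dim_s2_1 | rewrite stab_y2 stab_s2_1].
- by split; [exact: cell_v1 inG_s2 | exact: orbit_dim_s2_1 | exact: stab_s2_1].
- by split; [exact: cell_v1 inG1 | exact: orbit_dim_1_1 | exact: stab_1_1].
Qed.
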